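(* Let $n=2^m$. The nondeterministic quantum communication complexity of $\mathrm{DFS}$ on these inputs is $\Omega(\log n)$; hence also its exact quantum communication complexity is $\Omega(\log n)$. That is, there is a constant $c>0$ such that for all sufficiently large $m$, every nondeterministic (in particular every exact) quantum communication protocol for $\mathrm{DFS}$ with $n=2^m$ communicates at least $c\log n$ qubits.
   Context: For $r\in\{0,1\}^m$, let $F^r\in\{0,1\}^n$ ($n=2^m$) be the string indexed by $x\in\{0,1\}^m$ with $F^r_x=\sum_i x_i r_i \bmod 2$. For $g\in\{0,1\}^n$, $\mathrm{FS}(F^r,g)=g_r$ (the $r$-th bit of $g$). In the distributed problem $\mathrm{DFS}$, Alice gets $(F^a,g)$ and Bob gets $(F^b,h)$ with $a,b\in\{0,1\}^m$, $g,h\in\{0,1\}^n$, and $\mathrm{DFS}((F^a,g),(F^b,h))=\mathrm{FS}(F^a\oplus F^b,g\oplus h)=(g\oplus h)_{a\oplus b}$. A quantum communication protocol is a two-party protocol in which the parties exchange qubits (cost = number of qubits communicated) and produce an output bit. It is exact if it always outputs the correct value; it is nondeterministic if, for every input, it outputs 1 with positive probability exactly when the function value is 1. $\log$ is base 2. *)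

From mathcomp Require Import all_boot all_order all_algebra.
Set Implicit Arguments. Unset Strict Implicit. Unset Printing Implicit Defensive.
Import Order.TTheory GRing.Theory Num.Theory.
Local Open Scope ring_scope.

(** Bit strings of length N; qubit i of a computational basis state s is s i. *)
Definition bits (N : nat) := {ffun 'I_N -> bool}.

Section Quantum.
Variable C : numClosedFieldType.  (* amplitudes (e.g. the complex numbers) *)

(** Pure states of N qubits and operators on them, in the computational basis. *)
Definition qstate (N : nat) := bits N -> C.
Definition qop (N : nat) := bits N -> bits N -> C.

Definition apply_op N (U : qop N) (psi : qstate N) : qstate N :=
  fun s => \sum_(t : bits N) U s t * psi t.

Definition unitary N (U : qop N) : Prop :=
  forall s t : bits N, \sum_(r : bits N) (U r s)^* * U r t = (s == t)%:R.

(** Ownership o : bits N, with o i = true iff Alice holds qubit i. *)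
Definition mask N (o : bits N) (p : bool) (s : bits N) : bits N :=
  [ffun i => if o i == p then s i else false].

(** The operator u acting on the qubits owned by party p (true = Alice,
    false = Bob), tensored with the identity on the other party's qubits. *)
Definition local_op N (o : bits N) (p : bool) (u : qop N) : qop N :=
  fun s t => ([forall i, (o i != p) ==> (s i == t i)])%:R
             * u (mask o p s) (mask o p t).

Definition flip N (o : bits N) (i : 'I_N) : bits N :=
  [ffun j => if j == i then ~~ o j else o j].

(** A step of a protocol: a local unitary of Alice (depending on her input),
    a local unitary of Bob (depending on his input), or the transmission of
    qubit i to the other party (costing one qubit of communication). *)
Inductive step (N : nat) (X Y : Type) :=
| StepA of (X -> qop N)
| StepB of (Y -> qop N)
| Send of 'I_N.

Record protocol (X Y : Type) := Protocol {
  nqubits : nat;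
  own0 : bits nqubits;
  steps : seq (step nqubits X Y);
  outq : 'I_nqubits                   (* qubit measured to produce the output *)
}.

Fixpoint valid_steps N X Y (o : bits N) (ss : seq (step N X Y)) : Prop :=
  match ss with
  | [::] => True
  | StepA u :: r => (forall x, unitary (local_op o true (u x))) /\ valid_steps o r
  | StepB v :: r => (forall y, unitary (local_op o false (v y))) /\ valid_steps o r
  | Send i :: r => valid_steps (flip o i) r
  end.

Fixpoint run_steps N X Y (x : X) (y : Y) (o : bits N) (psi : qstate N)
    (ss : seq (step N X Y)) : qstate N :=
  match ss with
  | [::] => psi
  | StepA u :: r => run_steps x y o (apply_op (local_op o true (u x)) psi) r
  | StepB v :: r => run_steps x y o (apply_op (local_op o false (v y)) psi) r
  | Send i :: r => run_steps x y (flip o i) psi r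
  end.

Definition valid_protocol X Y (P : protocol X Y) : Prop :=
  valid_steps (own0 P) (steps P).

Definition init_state N : qstate N := fun s => (s == [ffun => false])%:R.

Definition accept_prob X Y (P : protocol X Y) (x : X) (y : Y) : C :=
  let psi := run_steps x y (own0 P) (@init_state (nqubits P)) (steps P) in
  \sum_(s : bits (nqubits P) | s (outq P)) `|psi s| ^+ 2.

Definition is_send N X Y (st : step N X Y) : bool :=
  if st is Send _ then true else false.

Definition cost X Y (P : protocol X Y) : nat := count (@is_send _ X Y) (steps P).

End Quantum.

(** The distributed Fourier sampling problem, n = 2^m, strings in {0,1}^n
    indexed by x in {0,1}^m. *)
Definition bstring (m : nat) := {ffun bits m -> bool}.

Definition Fr m (r : bits m) : bstring m :=
  [ffun x : bits m => \big[addb/false]_(i < m) (x i && r i)].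

Definition xorv m (a b : bits m) : bits m := [ffun i => a i (+) b i].
Definition xors m (g h : bstring m) : bstring m := [ffun x => g x (+) h x].

Definition FS m (r : bits m) (g : bstring m) : bool := g r.

(** DFS((F^a,g),(F^b,h)) = FS(F^a xor F^b, g xor h) = (g xor h)_{a xor b}
    (F^a xor F^b = F^(a xor b)). *)
Definition DFS m (a : bits m) (g : bstring m) (b : bits m) (h : bstring m) : bool :=
  FS (xorv a b) (xors g h).

(** Each party's input is a pair (F, g) of n-bit strings; inputs are promised
    to have F = F^a for some a. *)
Definition dfs_input m := (bstring m * bstring m)%type.

Definition nondet_DFS (C : numClosedFieldType) m
    (P : protocol C (dfs_input m) (dfs_input m)) : Prop :=
  valid_protocol P /\
  forall (a : bits m) (g : bstring m) (b : bits m) (h : bstring m),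
    (0 < accept_prob P (Fr a, g) (Fr b, h)) <-> DFS a g b h = true.

Definition exact_DFS (C : numClosedFieldType) m
    (P : protocol C (dfs_input m) (dfs_input m)) : Prop :=
  valid_protocol P /\
  forall (a : bits m) (g : bstring m) (b : bits m) (h : bstring m),
    accept_prob P (Fr a, g) (Fr b, h) = (DFS a g b h)%:R.

From mathcomp Require Import all_boot all_order all_algebra ring lra.
Set Implicit Arguments. Unset Strict Implicit. Unset Printing Implicit Defensive.
Import Order.TTheory GRing.Theory Num.Theory.
Local Open Scope ring_scope.

(* Split every basis state s into Alice's part and Bob's part.
   Local unitaries preserve a decomposition of the joint state as a sum of r
   products f_j(x, Alice's part) * g_j(y, Bob's part); sending one qubit at
   most doubles r (sum over the value of the qubit in transit).  Hence after
   k qubits of communication the acceptance probability, a sum of squared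
   moduli, is a sum of 4^k products al(x) * be(y): the matrix of acceptance
   probabilities has rank at most 4^k.  A nondeterministic protocol for DFS
   has acceptance probability nonzero exactly where DFS is 1, and on the
   inputs (F^a, 0), (F^b, delta_0) this pattern is the identity of size 2^m,
   so that 2^m x 2^m block is invertible.  Hence 4^k >= 2^m, i.e. k >= m/2. *)

Section QubitSplit.
Variable C : numClosedFieldType.
Variable N : nat.
Implicit Types (o s t a b : bits N) (p : bool).

Definition merge o p a b : bits N := [ffun k => if o k == p then a k else b k].

Lemma maskK o p s : mask o p (mask o p s) = mask o p s.
Proof. by apply/ffunP=> k; rewrite !ffunE; case: (o k == p). Qed.

Lemma mask_merge o p a b : mask o p (merge o p a b) = mask o p a.
Proof. by apply/ffunP=> k; rewrite !ffunE; case: (o k == p). Qed.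

Lemma maskN_merge o p a b : mask o (~~ p) (merge o p a b) = mask o (~~ p) b.
Proof. by apply/ffunP=> k; rewrite !ffunE; case: (o k); case: p. Qed.

Lemma merge_mask o p s : merge o p (mask o p s) (mask o (~~ p) s) = s.
Proof. by apply/ffunP=> k; rewrite !ffunE; case: (o k); case: p. Qed.

Lemma sum_mask_split o p (f g : bits N -> C) :
  \sum_s f (mask o p s) * g (mask o (~~ p) s) =
  (\sum_(a | mask o p a == a) f a) * (\sum_(b | mask o (~~ p) b == b) g b).
Proof.
rewrite mulr_suml; under [RHS]eq_bigr do rewrite mulr_sumr.
rewrite pair_big_dep /= (reindex_onto (fun ab => merge o p ab.1 ab.2)
   (fun s => (mask o p s, mask o (~~ p) s))) /=; last by move=> s _; apply: merge_mask.
apply: eq_big => [[a b]|[a b]] /=; rewrite mask_merge maskN_merge xpair_eqE //.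
by case/andP=> /eqP-> /eqP->.
Qed.

Lemma local_op_frame o p s t :
  [forall i, (o i != p) ==> (s i == t i)] = (mask o (~~ p) t == mask o (~~ p) s).
Proof.
apply/forallP/eqP => [eq_st | /ffunP eq_st k].
  apply/ffunP=> k; move: (eq_st k); rewrite !ffunE.
  by case: (o k); case: p {eq_st} => //= /eqP->.
by move: (eq_st k); rewrite !ffunE; case: (o k); case: p {eq_st} => //= ->.
Qed.

Lemma sum_mask_pick o p (f : bits N -> C) s :
  \sum_(b | mask o p b == b) (b == mask o p s)%:R * f b = f (mask o p s).
Proof.
rewrite (bigD1 (mask o p s)) ?maskK //= eqxx mul1r big1 ?addr0 // => b.
by case/andP=> _ /negbTE->; rewrite mul0r.
Qed.

Lemma local_op_split o p (u : qop C N) (f g : bits N -> C) s :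
  \sum_t local_op o p u s t * (f (mask o p t) * g (mask o (~~ p) t)) =
  (\sum_(a | mask o p a == a) u (mask o p s) a * f a) * g (mask o (~~ p) s).
Proof.
transitivity (\sum_t (u (mask o p s) (mask o p t) * f (mask o p t)) *
     ((mask o (~~ p) t == mask o (~~ p) s)%:R * g (mask o (~~ p) t))).
  by apply: eq_bigr => t _; rewrite /local_op local_op_frame; ring.
rewrite (sum_mask_split o p (fun a => u (mask o p s) a * f a)
                          (fun b => (b == mask o (~~ p) s)%:R * g b)).
by rewrite sum_mask_pick.
Qed.

Definition owner_test o p (i : 'I_N) (b : bool) a : C := ((a i == b) || (o i != p))%:R.

Lemma owner_test_mask o i s (b : bool) :
  owner_test o true i b (mask o true s) * owner_test o false i b (mask o false s)
  = (s i == b)%:R.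
Proof. by rewrite /owner_test !ffunE; case: (o i); rewrite ?orbT ?orbF ?mulr1 ?mul1r. Qed.

End QubitSplit.

Section BipartiteRank.
Variable C : numClosedFieldType.
Variables (X Y : Type) (N : nat).

Definition bipartite_rank_le (o : bits N) (r : nat) (Psi : X -> Y -> qstate C N) :=
  exists I : finType, #|I| = r /\
  exists (f : I -> X -> bits N -> C) (g : I -> Y -> bits N -> C),
  forall x y s, Psi x y s = \sum_j f j x (mask o true s) * g j y (mask o false s).

Fixpoint final_owner (o : bits N) (ss : seq (step C N X Y)) : bits N :=
  match ss with
  | [::] => o
  | Send i :: r => final_owner (flip o i) r
  | _ :: r => final_owner o r
  end.

Lemma bipartite_rank_StepA o r Psi (u : X -> qop C N) : bipartite_rank_le o r Psi ->
  bipartite_rank_le o r (fun x y => apply_op (local_op o true (u x)) (Psi x y)).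
Proof.
case=> I [cardI [f [g def_Psi]]]; exists I; split => //.
exists (fun j x a => \sum_(a' | mask o true a' == a') u x a a' * f j x a'), g.
move=> x y s; rewrite /apply_op; under eq_bigr do rewrite def_Psi mulr_sumr.
by rewrite exchange_big; apply: eq_bigr => j _; apply: local_op_split.
Qed.

Lemma bipartite_rank_StepB o r Psi (v : Y -> qop C N) : bipartite_rank_le o r Psi ->
  bipartite_rank_le o r (fun x y => apply_op (local_op o false (v y)) (Psi x y)).
Proof.
case=> I [cardI [f [g def_Psi]]]; exists I; split => //.
exists f, (fun j y b => \sum_(b' | mask o false b' == b') v y b b' * g j y b').
move=> x y s; rewrite /apply_op; under eq_bigr do rewrite def_Psi mulr_sumr.
rewrite exchange_big; apply: eq_bigr => j _.
rewrite mulrC -(local_op_split o false (v y) (g j y) (f j x) s).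
by apply: eq_bigr => t _; rewrite [f _ _ _ * _]mulrC.
Qed.

Definition set_bit (o : bits N) (p : bool) (i : 'I_N) (a : bits N) (b : bool) :=
  [ffun k => if k == i then (if o i == p then b else false) else a k].

Lemma mask_set_bit o p i s : mask o p s = set_bit o p i (mask (flip o i) p s) (s i).
Proof. by apply/ffunP=> k; rewrite !ffunE; case: (eqVneq k i) => [->|]. Qed.

(* The qubit in transit is summed over: index (j, b) keeps the j-th term with
   qubit i set to b, and the new owner of qubit i tests that it holds b. *)
Lemma bipartite_rank_Send o r Psi i :
  bipartite_rank_le o r Psi -> bipartite_rank_le (flip o i) (r * 2) Psi.
Proof.
case=> I [cardI [f [g def_Psi]]]; exists (I * bool)%type.
split; first by rewrite card_prod cardI card_bool.
set o' := flip o i.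
pose f' j b x a := owner_test C o' true i b a * f j x (set_bit o true i a b).
pose g' j b y c := owner_test C o' false i b c * g j y (set_bit o false i c b).
exists (fun jb => f' jb.1 jb.2), (fun jb => g' jb.1 jb.2) => x y s.
rewrite def_Psi -(pair_big xpredT xpredT (fun j b =>
  f' j b x (mask o' true s) * g' j b y (mask o' false s))) /=.
apply: eq_bigr => j _.
transitivity (\sum_(b : bool) (s i == b)%:R *
  (f j x (set_bit o true i (mask o' true s) b) *
   g j y (set_bit o false i (mask o' false s) b))).
  rewrite big_bool /= (mask_set_bit o true i s) (mask_set_bit o false i s).
  by case: (s i); rewrite /= ?mul1r ?mul0r ?addr0 ?add0r.
by apply: eq_bigr => b _; rewrite /f' /g' -(owner_test_mask C o' i s b); ring.
Qed.

Lemma bipartite_rank_run (ss : seq (step C N X Y)) o r Psi :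
  bipartite_rank_le o r Psi ->
  bipartite_rank_le (final_owner o ss) (r * 2 ^ count (@is_send C N X Y) ss)
    (fun x y => run_steps x y o (Psi x y) ss).
Proof.
elim: ss o r Psi => [|[u|v|i] ss IHss] o r Psi rPsi /=; first by rewrite muln1.
- by rewrite add0n; apply: IHss; apply: bipartite_rank_StepA.
- by rewrite add0n; apply: IHss; apply: bipartite_rank_StepB.
- by rewrite add1n expnS mulnA; apply: IHss; apply: bipartite_rank_Send.
Qed.

Lemma bipartite_rank_init o : bipartite_rank_le o 1 (fun _ _ => @init_state C N).
Proof.
exists unit; split; first exact: card_unit.
pose zero (a : bits N) : C := (a == [ffun => false])%:R.
exists (fun _ _ => zero), (fun _ _ => zero) => x y s.
rewrite (eq_bigl (pred1 tt)) ?big_pred1_eq => [|[]//].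
rewrite /init_state /zero -natrM mulnb; congr (nat_of_bool _)%:R.
apply/idP/andP => [/eqP-> | [/eqP/ffunP zA /eqP/ffunP zB]].
  by split; apply/eqP/ffunP=> k; rewrite !ffunE; case: ifP.
by apply/eqP/ffunP=> k; move: (zA k) (zB k); rewrite !ffunE; case: (o k).
Qed.

End BipartiteRank.

(* |psi s|^2 = psi s * (psi s)^*, so a rank-r state gives rank r^2; the test
   on the output qubit is performed by its final owner. *)
Lemma accept_prob_rank (C : numClosedFieldType) X Y (P : protocol C X Y) :
  exists K : finType, #|K| = (2 ^ cost P * 2 ^ cost P)%N /\
  exists (al : K -> X -> C) (be : K -> Y -> C),
  forall x y, accept_prob P x y = \sum_k al k x * be k y.
Proof.
have := bipartite_rank_run (steps P) (bipartite_rank_init C X Y (own0 P)).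
rewrite mul1n => -[I [cardI [f [g def_psi]]]].
set o := final_owner _ _ in def_psi; set q := outq P.
pose fA j j' x a := owner_test C o true q true a * (f j x a * (f j' x a)^*).
pose gB j j' y b := owner_test C o false q true b * (g j y b * (g j' y b)^*).
exists (I * I)%type; split; first by rewrite card_prod cardI.
exists (fun jj x => \sum_(a | mask o true a == a) fA jj.1 jj.2 x a).
exists (fun jj y => \sum_(b | mask o false b == b) gB jj.1 jj.2 y b) => x y.
rewrite /accept_prob -/q -(pair_big xpredT xpredT (fun j j' =>
   (\sum_(a | mask o true a == a) fA j j' x a) *
   (\sum_(b | mask o false b == b) gB j j' y b))) /=.
under [RHS]eq_bigr do under eq_bigr do rewrite -sum_mask_split.
under [RHS]eq_bigr do rewrite exchange_big /=.
rewrite exchange_big /= big_mkcond /=; apply: eq_bigr => s _.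
rewrite def_psi normCK rmorph_sum mulr_suml.
transitivity (\sum_j \sum_j' (s q == true)%:R *
   ((f j x (mask o true s) * g j y (mask o false s)) *
    (f j' x (mask o true s) * g j' y (mask o false s))^*)).
  case: (s q) => /=; last by rewrite big1 // => j _; rewrite big1 // => j' _; rewrite mul0r.
  by apply: eq_bigr => j _; rewrite mulr_sumr; apply: eq_bigr => j' _; rewrite mul1r.
apply: eq_bigr => j _; apply: eq_bigr => j' _.
by rewrite /fA /gB -(owner_test_mask C o q s true) rmorphM /=; ring.
Qed.

Lemma diag_support_rank_le (C : numClosedFieldType) (X Y : Type) (K : finType)
    (al : K -> X -> C) (be : K -> Y -> C) (M : X -> Y -> C) n
    (xs : 'I_n -> X) (ys : 'I_n -> Y) :
  (forall x y, M x y = \sum_k al k x * be k y) ->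
  (forall i j, (M (xs i) (ys j) != 0) = (i == j)) -> (n <= #|K|)%N.
Proof.
move=> def_M M_diag; pose A : 'M[C]_n := \matrix_(i, j) M (xs i) (ys j).
have A_factor : A = (\matrix_(i < n, k < #|K|) al (enum_val k) (xs i)) *m
                    (\matrix_(k < #|K|, j < n) be (enum_val k) (ys j)).
  apply/matrixP => i j; rewrite !mxE def_M; under [RHS]eq_bigr do rewrite !mxE.
  by rewrite -(big_enum_val (A := K) (fun k => al k (xs i) * be k (ys j))).
have A_diag : A = diag_mx (\row_i M (xs i) (ys i)).
  apply/matrixP => i j; rewrite !mxE.
  have [->|neq_ij] := eqVneq i j; first by rewrite mulr1n.
  by rewrite mulr0n; apply/eqP; rewrite -[_ == 0]negbK M_diag (negbTE neq_ij).
have A_unit : A \in unitmx.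
  by rewrite unitmxE unitfE A_diag det_diag; apply/prodf_neq0 => i _; rewrite mxE M_diag.
rewrite -(mxrank_unit A_unit) A_factor.
exact: leq_trans (mxrankM_maxl _ _) (rank_leq_col _).
Qed.

Lemma card_bits m : #|bits m| = (2 ^ m)%N.
Proof. by rewrite card_ffun card_bool card_ord. Qed.

Lemma xorv_eq0 m (a b : bits m) : (xorv a b == [ffun => false]) = (a == b).
Proof.
apply/eqP/eqP => [/ffunP xor_ab | ->]; last by apply/ffunP => k; rewrite !ffunE addbb.
by apply/ffunP => k; move: (xor_ab k); rewrite !ffunE; case: (a k); case: (b k).
Qed.

Lemma DFS_fooling m (a b : bits m) :
  DFS a [ffun => false] b [ffun z => z == [ffun => false]] = (a == b).
Proof. by rewrite /DFS /FS /xors !ffunE xorv_eq0. Qed.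

Definition DFS_support (C : numClosedFieldType) m
    (P : protocol C (dfs_input m) (dfs_input m)) :=
  forall a g b h, (accept_prob P (Fr a, g) (Fr b, h) != 0) = DFS a g b h.

Lemma DFS_support_cost (C : numClosedFieldType) m
    (P : protocol C (dfs_input m) (dfs_input m)) :
  DFS_support P -> (m <= cost P + cost P)%N.
Proof.
move=> suppP; have [K [cardK [al [be def_acc]]]] := accept_prob_rank P.
rewrite -(leq_exp2l _ _ (isT : 1 < 2)%N) expnD -cardK -card_bits.
pose z0 : bstring m := [ffun => false].
pose e0 : bstring m := [ffun z => z == [ffun => false]].
apply: (diag_support_rank_le (xs := fun i => (Fr (enum_val i), z0))
                             (ys := fun j => (Fr (enum_val j), e0)) def_acc) => i j.
by rewrite suppP DFS_fooling (inj_eq enum_val_inj).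
Qed.

Lemma accept_prob_ge0 (C : numClosedFieldType) X Y (P : protocol C X Y) x y :
  0 <= accept_prob P x y.
Proof. by apply: sumr_ge0 => s _; rewrite exprn_ge0. Qed.

Lemma nondet_DFS_support (C : numClosedFieldType) m
    (P : protocol C (dfs_input m) (dfs_input m)) : nondet_DFS P -> DFS_support P.
Proof.
case=> _ acceptP a g b h.
rewrite -[_ != 0]andbT -(accept_prob_ge0 P (Fr a, g) (Fr b, h)) -lt0r.
by apply/idP/idP => /(acceptP a g b h).
Qed.

Lemma exact_DFS_support (C : numClosedFieldType) m
    (P : protocol C (dfs_input m) (dfs_input m)) : exact_DFS P -> DFS_support P.
Proof. by case=> _ acceptP a g b h; rewrite acceptP pnatr_eq0 eqb0 negbK. Qed.

Unset Implicit Arguments.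
Theorem lemma5 (C : numClosedFieldType) :
  exists c : rat, 0 < c /\
  exists m0 : nat, forall m : nat, (m0 <= m)%N ->
    (forall P : protocol C (dfs_input m) (dfs_input m),
        nondet_DFS P -> c * (trunc_log 2 (2 ^ m))%:R <= (cost P)%:R) /\
    (forall P : protocol C (dfs_input m) (dfs_input m),
        exact_DFS P -> c * (trunc_log 2 (2 ^ m))%:R <= (cost P)%:R).
Proof.
exists (1 / 2); split=> //; exists 0%N => m _.
have half_bound (P : protocol C (dfs_input m) (dfs_input m)) :
    DFS_support P -> 1 / 2 * (trunc_log 2 (2 ^ m))%:R <= (cost P)%:R :> rat.
  by move=> /DFS_support_cost; rewrite trunc_expnK // -(ler_nat rat) natrD; lra.
split=> P specP; apply: half_bound.
  exact: nondet_DFS_support.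
exact: exact_DFS_support.
Qed.
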